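(* Let $m\ge 4$, $t$, $g$ be positive integers with $t\ge g+1$, and put $\alpha=(t-1)-g$. Consider a bin configuration of the game $G(m,t,g)$ in which every current bin load is at most $t-1$. Let $A,B$ be two distinct bins, and define: - $s$ as the sum of the loads of all bins other than $A$ and $B$; - $r=(m-1)g-\alpha-s$; - $o=t-r$. Suppose that all of the following hold: - $r\le t-1$; - the load of $A$ is at most $\alpha$; - the load of $A$ is strictly greater than $(m-1)g-\alpha-o-s$. Then Algorithm wins from this configuration.
   Context: Bin stretching game $G(m,t,g)$: there are $m$ bins. In each round Adversary presents an item of positive integer size, and Algorithm then irrevocably places it into one of the $m$ bins. The load of a bin is the total size of the items in it. A bin configuration consists of: - the current loads $L_1,\dots,L_m$ of the bins, and - the multiset $\mathcal I$ of items presented so far, placed so that the bins have exactly these loads. ''Algorithm wins from this configuration'' means the following. There is an online rule which, given the configuration and the items presented so far, assigns each newly presented item to a bin. This rule must guarantee: for every finite sequence $e_1,\dots,e_j$ of further positive-integer items such that the multiset $\mathcal I\cup\{e_1,\dots,e_j\}$ can be partitioned into $m$ parts each of total size at most $g$, every bin load is at most $t-1$ after these items are placed. *)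

From mathcomp Require Import all_boot all_order all_algebra.
Set Implicit Arguments. Unset Strict Implicit. Unset Printing Implicit Defensive.

Definition packable (m g : nat) (s : seq nat) : Prop :=
  exists f : 'I_(size s) -> 'I_m,
    forall i : 'I_m, \sum_(k < size s | f k == i) nth 0 s k <= g.

Definition bin_config (m : nat) (L : 'I_m -> nat) (I : seq nat) : Prop :=
  all (fun x => 0 < x) I /\
  exists f : 'I_(size I) -> 'I_m,
    forall i : 'I_m, \sum_(k < size I | f k == i) nth 0 I k = L i.

(* An online rule: given the list of newly presented items e_1..e_k
   (the last one, e_k, being the current item), choose a bin for e_k. *)
Definition online_rule (m : nat) := seq nat -> 'I_m.

Definition final_load (m : nat) (L : 'I_m -> nat) (rule : online_rule m)
    (es : seq nat) (i : 'I_m) : nat :=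
  L i + \sum_(k < size es | rule (take k.+1 es) == i) nth 0 es k.

Definition alg_wins (m t g : nat) (L : 'I_m -> nat) (I : seq nat) : Prop :=
  exists rule : online_rule m,
    forall es : seq nat, all (fun x => 0 < x) es ->
      packable m g (I ++ es) ->
      forall i : 'I_m, final_load L rule es i <= t - 1.

From mathcomp Require Import all_boot all_order all_algebra zify.
Import GRing.Theory Num.Theory.
Set Implicit Arguments. Unset Strict Implicit.

(* Algorithm uses only the bins A and B, each with capacity c = t - 1, and
   the threshold th = max(r, 0).  Packability leaves at most th + c for A and B
   together, so once one bin reaches th the other has room for everything
   that remains.  While neither has reached th, an item that does not fit
   into B exceeds c - th; it fits into A because A <= alpha = c - g, and it
   lifts A to more than A + c - th >= th, where 2 th <= A + c is exactly the
   last hypothesis (o = t - r). *)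

Section TwoBinStrategy.

Variables c th : nat.

Definition to_B (ab : nat * nat) (x : nat) : bool :=
  (th <= ab.1) || ((ab.2 < th) && (ab.2 + x <= c)).

Definition place (ab : nat * nat) (x : nat) : nat * nat :=
  if to_B ab x then (ab.1, ab.2 + x) else (ab.1 + x, ab.2).

Definition safe (alpha : nat) (ab : nat * nat) : Prop :=
  [/\ ab.1 <= c, ab.2 <= c &
      [\/ th <= ab.1, th <= ab.2 | ab.1 <= alpha /\ th.*2 <= ab.1 + c]].

Lemma place_sum ab x : (place ab x).1 + (place ab x).2 = ab.1 + ab.2 + x.
Proof. by rewrite /place; case: ifP => _ /=; lia. Qed.

Lemma place_safe alpha g ab x : c = alpha + g -> x <= g ->
  ab.1 + ab.2 + x <= th + c -> safe alpha ab -> safe alpha (place ab x).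
Proof.
case: ab => a b c_eq le_xg /= room [/= le_ac le_bc reach].
rewrite /safe /place /to_B /=.
case: ifP => [/orP[le_th_a | /andP[lt_b_th fits_b]] | /norP[]] /=.
- by split=> //; [lia | constructor 1].
- split=> //; case: reach => [? | ? | ?]; [by constructor 1 | constructor 2; lia | by constructor 3].
- rewrite -ltnNge => lt_a_th not_fits_b.
  have [le_th_b|lt_b_th] := leqP th b.
    by split=> //; [lia | constructor 2].
  rewrite lt_b_th -ltnNge /= in not_fits_b.
  case: reach => [|| [le_a_alpha le_th2]]; try lia.
  by split=> //; [lia | constructor 1; lia].
Qed.

Lemma foldl_place_safe alpha g z es : c = alpha + g -> all (leq^~ g) es ->
  z.1 + z.2 + sumn es <= th + c -> safe alpha z ->
  safe alpha (foldl place z es).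
Proof.
move=> c_eq; elim: es z => [|x es IH] z //= /andP[le_xg le_esg] room safe_z.
apply: IH => //; last by apply: place_safe c_eq le_xg _ safe_z; lia.
by rewrite place_sum; lia.
Qed.

Variables (m : nat) (A B : 'I_m).

Definition two_bin_rule (z : nat * nat) : online_rule m :=
  fun es => if to_B (foldl place z (take (size es).-1 es)) (last 0 es)
            then B else A.

Lemma two_bin_rule_rcons z es x :
  two_bin_rule z (rcons es x) = if to_B (foldl place z es) x then B else A.
Proof. by rewrite /two_bin_rule last_rcons size_rcons -cats1 take_size_cat. Qed.

End TwoBinStrategy.

Lemma final_load_rcons m (L : 'I_m -> nat) rule es x i :
  final_load L rule (rcons es x) i =
  final_load L rule es i + (if rule (rcons es x) == i then x else 0).
Proof.
rewrite /final_load -addnA; congr (_ + _).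
rewrite size_rcons big_mkcond big_ord_recr /= [in RHS]big_mkcond /=.
congr (_ + _).
  apply: eq_bigr => k _.
  by rewrite -cats1 takel_cat ?nth_cat ?ltn_ord.
by rewrite take_oversize ?size_rcons // nth_rcons ltnn eqxx; case: ifP.
Qed.

Lemma final_load_two_bin_rule c th m (L : 'I_m -> nat) (A B : 'I_m) es i :
  A != B -> let ab := foldl (place c th) (L A, L B) es in
  final_load L (two_bin_rule c th A B (L A, L B)) es i =
  if i == A then ab.1 else if i == B then ab.2 else L i.
Proof.
move=> neq_AB; elim/last_ind: es => [|es x IH] /=.
  by rewrite /final_load big_ord0 addn0; case: ifP => [/eqP->|_] //; case: ifP => [/eqP->|].
rewrite final_load_rcons IH two_bin_rule_rcons foldl_rcons.
set ab := foldl _ _ es; rewrite /place.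
have neq_BA : B != A by rewrite eq_sym.
case: (eqVneq i A) => [->|neq_iA]; last case: (eqVneq i B) => [->|neq_iB];
  case: to_B => /=; rewrite ?eqxx ?(negPf neq_AB) ?(negPf neq_BA) ?addn0 //.
  by rewrite eq_sym (negPf neq_iB) addn0.
by rewrite eq_sym (negPf neq_iA) addn0.
Qed.

Lemma sumn_nth (s : seq nat) : sumn s = \sum_(k < size s) nth 0 s k.
Proof. by rewrite sumnE (big_nth 0) big_mkord. Qed.

Lemma packable_sumn m g s : packable m g s -> sumn s <= m * g.
Proof.
case=> f pack; rewrite sumn_nth (partition_big f predT) //=.
rewrite -[m in m * g]card_ord -sum_nat_const.
by apply: leq_sum => i _; exact: pack.
Qed.

Lemma packable_item_le m g s : packable m g s -> all (leq^~ g) s.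
Proof.
case=> f pack; apply/(all_nthP 0) => k lt_ks.
apply: leq_trans (pack (f (Ordinal lt_ks))).
by rewrite (bigD1 (Ordinal lt_ks)) //= leq_addr.
Qed.

Lemma bin_config_sumn m (L : 'I_m -> nat) I : bin_config L I -> sumn I = \sum_i L i.
Proof.
case=> _ [f conf]; rewrite sumn_nth (partition_big f predT) //=.
by apply: eq_bigr => i _; exact: conf.
Qed.

Theorem mainTheorem3 (m t g : nat) (L : 'I_m -> nat) (I : seq nat) (A B : 'I_m) :
  4 <= m -> 0 < t -> 0 < g -> g + 1 <= t ->
  bin_config L I ->
  (forall i : 'I_m, L i <= t - 1) ->
  A != B ->
  let alpha : int := (Posz t - 1 - Posz g)%R in
  let s : int := Posz (\sum_(i : 'I_m | (i != A) && (i != B)) L i) in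
  let r : int := ((Posz m - 1) * Posz g - alpha - s)%R in
  let o : int := (Posz t - r)%R in
  (r <= Posz t - 1)%R ->
  (Posz (L A) <= alpha)%R ->
  ((Posz m - 1) * Posz g - alpha - o - s < Posz (L A))%R ->
  @alg_wins m t g L I.
Proof.
move=> _ _ _ le_gt conf le_Lt neq_AB alpha s r o _ le_LA_alpha lt_LA.
pose S := \sum_(i | (i != A) && (i != B)) L i.
have sumI : sumn I = L A + L B + S.
  by rewrite (bin_config_sumn conf) (bigD1 A) //= (bigD1 B) 1?eq_sym //= addnA.
have r_eq : r = (Posz (m * g) - Posz g - alpha - s)%R by rewrite /r mulrBl mul1r.
have [th [le_r_th th_cases]] : exists th : nat, (r <= Posz th)%R /\ (th = 0 \/ Posz th = r).
  by case: (r) => n; [exists n | exists 0]; lia.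
exists (two_bin_rule (t - 1) th A B (L A, L B)) => es _ pack i.
have room : L A + L B + sumn es <= th + (t - 1).
  have := packable_sumn pack; rewrite sumn_cat sumI.
  rewrite r_eq /alpha /s -/S in le_r_th; lia.
have := @foldl_place_safe (t - 1) th (t - 1 - g) g (L A, L B) es.
case=> //; first by lia.
- by move: (packable_item_le pack); rewrite all_cat => /andP[].
- split=> //=; case: th_cases => [->|th_r]; first by constructor 1.
  constructor 3; rewrite /o r_eq /alpha /s -/S in lt_LA le_LA_alpha th_r; lia.
move=> le_A le_B _; rewrite final_load_two_bin_rule //.
by case: eqVneq => // _; case: eqVneq.
Qed.
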